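(* Let $G$ be a vertex-weighted complex digraph (as defined in the context) and $k\ge 1$ an integer. Then $G$ has exactly $k$ connected components if and only if the algebraic multiplicity of the eigenvalue $0$ of $L(G)$ equals $k$.
   Context: A vertex-weighted complex digraph is $G=(V,E)$ with $V=\{1,\dots,n\}$, $E\subseteq\{(i,j)\in V\times V:i\neq j\}$ such that for $i\neq j$ at most one of $(i,j),(j,i)$ lies in $E$, together with nonzero complex vertex weights $w_1,\dots,w_n\in\mathbb C\setminus\{0\}$; for each $i$ fix a square root $s_i$ with $s_i^2=w_i$. Vertices $i\neq j$ are adjacent iff $(i,j)\in E$ or $(j,i)\in E$. The adjacency matrix $A(G)$ has $A_{ij}=\overline{s_i}\,s_j$ if $i,j$ are adjacent and $A_{ij}=0$ otherwise. The degree of vertex $i$ is $d_i=\sum_{j \text{ adjacent to } i}|w_j|$, $D(G)=\mathrm{diag}(d_1,\dots,d_n)$, the combinatorial Laplacian is $L(G)=D(G)-A(G)$ and the signless Laplacian is $Q(G)=D(G)+A(G)$; both are Hermitian positive semidefinite. Connectivity, connected components and cycles refer to the underlying undirected graph. *)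

From HB Require Import structures.
From mathcomp Require Import all_boot all_order all_algebra.
Set Implicit Arguments. Unset Strict Implicit. Unset Printing Implicit Defensive.
Import Order.TTheory GRing.Theory Num.Theory.
Local Open Scope ring_scope.

(* Vertices are 'I_n (= {0,...,n-1}, a relabelling of {1,...,n}).
   Arcs: E : rel 'I_n.  A digraph in the paper's sense: no loops, and
   for i <> j at most one of (i,j),(j,i) is an arc. *)
Definition is_digraph (n : nat) (E : rel 'I_n) : Prop :=
  (forall i, ~~ E i i) /\ (forall i j, ~~ (E i j && E j i)).

Definition adjacent (n : nat) (E : rel 'I_n) : rel 'I_n :=
  fun i j => (i != j) && (E i j || E j i).

Definition num_components (n : nat) (E : rel 'I_n) : nat :=
  n_comp (adjacent E) 'I_n.

Section Mats.
Variable C : numClosedFieldType.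

Definition adj_mx (n : nat) (E : rel 'I_n) (s : 'I_n -> C) : 'M[C]_n :=
  \matrix_(i, j) (if adjacent E i j then (s i)^* * s j else 0).

Definition vdegree (n : nat) (E : rel 'I_n) (w : 'I_n -> C) (i : 'I_n) : C :=
  \sum_(j | adjacent E i j) `|w j|.

Definition deg_mx (n : nat) (E : rel 'I_n) (w : 'I_n -> C) : 'M[C]_n :=
  \matrix_(i, j) (if i == j then vdegree E w i else 0).

Definition laplacian (n : nat) (E : rel 'I_n) (w s : 'I_n -> C) : 'M[C]_n :=
  deg_mx E w - adj_mx E s.

Definition alg_mult (n : nat) (M : 'M[C]_n) (a : C) : nat :=
  mup a (char_poly M).
End Mats.

(* L is Hermitian, hence normal, hence unitarily
      diagonalisable: L = P^-1 diag(d) P.  Both the characteristic polynomial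
      and the rank are similarity invariants, and for diag(d) the
      multiplicity of the root 0 and the dimension of the kernel both count
      the zero entries of d.  So for a normal matrix the algebraic and the
      geometric multiplicity of 0 coincide.

   MathComp kernels are left kernels {x | x L = 0}.
      For every component with representative r, the vector u_r equal to s_i
      on the component and 0 elsewhere is killed by L; distinct u_r are
      independent.  Conversely the Dirichlet identity
         2 x L x^* = sum over adjacent (i, j) of |s_j x_i - s_i x_j|^2
      shows that x L = 0 forces x_i / s_i to be constant on components, so x
      is a combination of the u_r.  Hence dim ker L = number of components.

   The main
   theorem combines the two halves. *)

From HB Require Import structures.
From mathcomp Require Import all_boot all_order all_algebra.
From mathcomp Require Import ring sesquilinear spectral.
Import Order.TTheory GRing.Theory Num.Theory.
Set Implicit Arguments. Unset Strict Implicit. Unset Printing Implicit Defensive.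
Local Open Scope ring_scope.

Lemma rank_kermx_span (F : fieldType) (m c : nat) (A : 'M[F]_m) (V : 'M[F]_(c, m)) :
  row_free V -> V *m A = 0 -> (forall x : 'rV_m, x *m A = 0 -> (x <= V)%MS) ->
  \rank (kermx A) = c.
Proof.
move=> freeV VA kerV; rewrite -(eqP freeV); apply/eqmx_rank/andP; split.
  by apply/row_subP => i; apply: kerV; apply/sub_kermxP; rewrite row_sub.
exact/sub_kermxP.
Qed.

Lemma char_poly_similar (F : fieldType) (n : nat) (P D : 'M[F]_n) :
  P \in unitmx -> char_poly (invmx P *m D *m P) = char_poly D.
Proof.
move=> Pu; rewrite /char_poly /char_poly_mx.
set Pi := map_mx polyC (invmx P); set Pp := map_mx polyC P.
have PiPp : Pi *m Pp = 1%:M by rewrite -map_mxM mulVmx // map_mx1.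
have -> : 'X%:M - map_mx polyC (invmx P *m D *m P) =
          Pi *m ('X%:M - map_mx polyC D) *m Pp.
  rewrite mulmxBr mulmxBl !map_mxM -/Pi -/Pp; congr (_ - _).
  by rewrite mul_mx_scalar -scalemxAl PiPp scalemx1.
by rewrite !det_mulmx mulrAC -det_mulmx PiPp det1 mul1r.
Qed.

Lemma rank_kermx_similar (F : fieldType) (n : nat) (P D : 'M[F]_n) :
  P \in unitmx -> \rank (kermx (invmx P *m D *m P)) = \rank (kermx D).
Proof.
move=> Pu; rewrite !mxrank_ker mxrankMfree ?row_free_unit //.
by rewrite eqmxMfull // row_full_unit unitmx_inv.
Qed.

Lemma sumr_delta (R : nzRingType) (n : nat) (P : pred 'I_n) (i : 'I_n) (g : 'I_n -> R) :
  \sum_(j | P j) (i == j)%:R * g j = if P i then g i else 0.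
Proof.
rewrite big_mkcond (bigD1 i) //= eqxx mul1r big1 ?addr0 //.
by move=> j /negbTE; rewrite eq_sym => ->; rewrite mul0r if_same.
Qed.

Lemma mup0_char_poly_diag (F : fieldType) (n : nat) (d : 'rV[F]_n) :
  mup 0 (char_poly (diag_mx d)) = #|[pred i | d 0 i == 0]|.
Proof.
rewrite char_poly_trig ?diag_mx_is_trig //.
have -> : \prod_(i < n) ('X - (diag_mx d i i)%:P) =
          \prod_(y <- [seq d 0 i | i <- index_enum 'I_n]) ('X - y%:P).
  by rewrite big_map; apply: eq_bigr => i _; rewrite mxE eqxx mulr1n.
rewrite mu_prod_XsubC count_map cardE /enum_mem size_filter.
by apply: eq_count => i /=; rewrite eq_sym.
Qed.

Lemma rank_kermx_diag (F : fieldType) (n : nat) (d : 'rV[F]_n) :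
  \rank (kermx (diag_mx d)) = #|[pred i | d 0 i == 0]|.
Proof.
set Z := [pred i | d 0 i == 0].
pose V := \matrix_(k < #|Z|, i < n) ((i == enum_val k)%:R : F).
apply: (@rank_kermx_span _ _ _ _ V).
- apply/row_freeP; exists V^T; apply/matrixP => k k'; rewrite !mxE.
  under eq_bigr do rewrite !mxE [_ == enum_val k]eq_sym.
  by rewrite (@sumr_delta _ _ xpredT) /= (inj_eq enum_val_inj).
- apply/matrixP => k j; rewrite mul_mx_diag !mxE.
  case: eqP => [->|_]; last by rewrite mul0r.
  by have := enum_valP k; rewrite inE => /eqP ->; rewrite mulr0.
- move=> x xD; apply/submxP; exists (\row_k x 0 (enum_val k)).
  apply/rowP => i; rewrite !mxE.
  under eq_bigr do rewrite !mxE mulrC.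
  rewrite -(big_enum_val (A:=Z) (fun j => (i == j)%:R * x 0 j)) sumr_delta.
  case: ifP => // /negbT iZ.
  have /rowP /(_ i) := xD; rewrite mul_mx_diag !mxE => /eqP.
  by rewrite mulf_eq0 inE in iZ *; rewrite (negbTE iZ) orbF => /eqP.
Qed.

(* For a normal complex matrix the algebraic and geometric multiplicities of
   the eigenvalue 0 agree, by the spectral theorem. *)
Lemma mup0_char_poly_normal (C : numClosedFieldType) (n : nat) (A : 'M[C]_n) :
  A \is normalmx -> mup 0 (char_poly A) = \rank (kermx A).
Proof.
have Pu := spectral_unit A.
move/orthomx_spectralP => ->.
by rewrite char_poly_similar // rank_kermx_similar // mup0_char_poly_diag rank_kermx_diag.
Qed.

Lemma adjacent_sym (n : nat) (E : rel 'I_n) : symmetric (adjacent E).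
Proof. by move=> i j; rewrite /adjacent eq_sym orbC. Qed.

Lemma connect_sym_adjacent (n : nat) (E : rel 'I_n) : connect_sym (adjacent E).
Proof. exact/sym_connect_sym/adjacent_sym. Qed.

Section Laplacian.
Variables (C : numClosedFieldType) (n : nat) (E : rel 'I_n) (w s : 'I_n -> C).
Hypothesis sqrt_w : forall i, s i ^+ 2 = w i.

Local Notation L := (laplacian E w s).

Lemma norm_weight j : `|w j| = s j * (s j)^*.
Proof. by rewrite -sqrt_w normrX normCK. Qed.

(* L is Hermitian: the degrees are real and A_ji = conj(A_ij). *)
Lemma laplacian_hermitian : L \is hermsymmx.
Proof.
apply/is_hermitianmxP; rewrite expr0 scale1r; apply/matrixP => i j.
rewrite !mxE eq_sym adjacent_sym rmorphB /=; congr (_ - _).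
  case: eqP => [->|_]; last by rewrite rmorph0.
  rewrite /vdegree rmorph_sum; apply: eq_bigr => k _.
  exact/esym/geC0_conj/normr_ge0.
by case: ifP => _; rewrite ?rmorph0 // rmorphM /= conjCK mulrC.
Qed.

Lemma laplacian_row (x : 'rV[C]_n) j :
  (x *m L) 0 j = x 0 j * vdegree E w j - \sum_(i | adjacent E j i) x 0 i * ((s i)^* * s j).
Proof.
rewrite !mxE; under eq_bigr do rewrite !mxE mulrBr.
rewrite sumrB (bigD1 j) //= eqxx big1 ?addr0; last by move=> i /negbTE ->; rewrite mulr0.
congr (_ - _); rewrite [RHS]big_mkcond; apply: eq_bigr => i _.
by rewrite adjacent_sym; case: ifP; rewrite ?mulr0.
Qed.

Definition edge_sum (F : 'I_n -> 'I_n -> C) : C :=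
  \sum_i \sum_(j | adjacent E i j) F i j.

Lemma edge_sum_swap (F : 'I_n -> 'I_n -> C) :
  edge_sum F = edge_sum (fun i j => F j i).
Proof.
rewrite /edge_sum; under eq_bigr do rewrite big_mkcond.
rewrite exchange_big /=; apply: eq_bigr => i _.
by rewrite [RHS]big_mkcond; apply: eq_bigr => j _; rewrite adjacent_sym.
Qed.

Lemma edge_sumD (F G : 'I_n -> 'I_n -> C) :
  edge_sum (fun i j => F i j + G i j) = edge_sum F + edge_sum G.
Proof. by rewrite /edge_sum -big_split; apply: eq_bigr => i _; rewrite big_split. Qed.

Lemma edge_sumB (F G : 'I_n -> 'I_n -> C) :
  edge_sum (fun i j => F i j - G i j) = edge_sum F - edge_sum G.
Proof. by rewrite /edge_sum -sumrB; apply: eq_bigr => i _; rewrite sumrB. Qed.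

Lemma laplacian_dirichlet (x : 'rV[C]_n) :
  (\sum_j (x *m L) 0 j * (x 0 j)^*) *+ 2 =
  edge_sum (fun i j => `|s j * x 0 i - s i * x 0 j| ^+ 2).
Proof.
pose a i j := s j * x 0 i.
pose P1 := edge_sum (fun i j => a i j * (a i j)^*).
pose P3 := edge_sum (fun i j => a i j * (a j i)^*).
have form : \sum_j (x *m L) 0 j * (x 0 j)^* = P1 - P3.
  under eq_bigr do rewrite laplacian_row mulrBl mulr_suml.
  rewrite sumrB; congr (_ - _).
    apply: eq_bigr => i _; rewrite /vdegree mulr_sumr mulr_suml.
    by apply: eq_bigr => j _; rewrite norm_weight /a rmorphM /=; ring.
  rewrite /P3 edge_sum_swap; apply: eq_bigr => j _; apply: eq_bigr => i _.
  by rewrite /a rmorphM /=; ring.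
have -> : edge_sum (fun i j => `|s j * x 0 i - s i * x 0 j| ^+ 2) =
   edge_sum (fun i j => (a i j * (a i j)^* + a j i * (a j i)^*) -
                        (a i j * (a j i)^* + a j i * (a i j)^*)).
  apply: eq_bigr => i _; apply: eq_bigr => j _.
  by rewrite normCK rmorphB /= -/(a i j) -/(a j i); ring.
rewrite edge_sumB !edge_sumD -(edge_sum_swap (fun i j => a i j * (a i j)^*)).
by rewrite -(edge_sum_swap (fun i j => a i j * (a j i)^*)) -/P1 -/P3 form mulr2n; ring.
Qed.

Lemma laplacian_ker_edge (x : 'rV[C]_n) :
  x *m L = 0 -> forall i j, adjacent E i j -> s j * x 0 i = s i * x 0 j.
Proof.
move=> xL i j ij; pose f i j := `|s j * x 0 i - s i * x 0 j| ^+ 2.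
have f_ge0 i' j' : 0 <= f i' j' by apply: exprn_ge0.
have sum0 : edge_sum f = 0.
  by rewrite -laplacian_dirichlet xL big1 ?mul0rn // => k _; rewrite mxE mul0r.
have /psumr_eq0P row0 : \sum_(j | adjacent E i j) f i j = 0.
  by apply: (psumr_eq0P _ sum0) => // k _; apply: sumr_ge0.
move: (row0 (fun k _ => f_ge0 i k) j ij) => /eqP.
by rewrite expf_eq0 normr_eq0 subr_eq0 => /eqP.
Qed.

Local Notation comp_root := (fingraph.root (adjacent E)).

Lemma comp_root_adjacent i j : adjacent E i j -> comp_root i = comp_root j.
Proof.
by move=> ij; apply/(fingraph.rootP (connect_sym_adjacent E)); apply: connect1.
Qed.

Definition component_vec (r : 'I_n) : 'rV[C]_n :=
  \row_i (if comp_root i == r then s i else 0).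

(* At a vertex of the component, the degree term cancels the neighbour
   terms; elsewhere both vanish. *)
Lemma component_vec_ker r : component_vec r *m L = 0.
Proof.
apply/rowP => j; rewrite laplacian_row !mxE.
case: (boolP (comp_root j == r)) => [/eqP jr | jr].
  rewrite /vdegree mulr_sumr -sumrB big1 // => i ji.
  by rewrite mxE -(comp_root_adjacent ji) jr eqxx norm_weight; ring.
rewrite mul0r sub0r big1 ?oppr0 // => i ji.
by rewrite mxE -(comp_root_adjacent ji) (negbTE jr) mul0r.
Qed.

Hypothesis s_neq0 : forall i, s i != 0.

Lemma laplacian_ker_root (x : 'rV[C]_n) i :
  x *m L = 0 -> x 0 (comp_root i) / s (comp_root i) = x 0 i / s i.
Proof.
move=> xL; pose g j := x 0 j / s j.
have g_edge a b : adjacent E a b -> g a == g b.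
  by move=> ab; rewrite /g eqr_div // mulrC (laplacian_ker_edge xL ab) mulrC.
have closed_g : closed (adjacent E) [pred j | g j == g i].
  by move=> a b ab; rewrite !inE (eqP (g_edge a b ab)).
by have := closed_connect closed_g (connect_root _ i); rewrite !inE eqxx => /esym/eqP.
Qed.

Lemma laplacian_ker_span (x : 'rV[C]_n) :
  x *m L = 0 -> x = \sum_(r | roots (adjacent E) r) (x 0 r / s r) *: component_vec r.
Proof.
move=> xL; apply/rowP => i; rewrite summxE (bigD1 (comp_root i)) //=; last first.
  exact: (roots_root (connect_sym_adjacent E)).
rewrite big1 ?addr0 => [|r /andP [_ r_i]]; last by rewrite !mxE eq_sym (negbTE r_i) mulr0.
by rewrite !mxE eqxx laplacian_ker_root // divfK.
Qed.

(* The dimension of the kernel of L is the number of components: the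
   component vectors are independent (they have disjoint supports and
   s never vanishes) and span the kernel. *)
Lemma rank_kermx_laplacian : \rank (kermx L) = num_components E.
Proof.
set R := [pred r | roots (adjacent E) r].
have -> : num_components E = #|R|.
  by apply: eq_card => r; rewrite !inE andbT.
have rootR (k : 'I_#|R|) : comp_root (enum_val k) = enum_val k.
  by have := enum_valP k; rewrite inE => /eqP.
pose V := \matrix_(k < #|R|) component_vec (enum_val k).
apply: (@rank_kermx_span _ _ _ _ V).
- pose B := \matrix_(i < n, k < #|R|) ((i == enum_val k)%:R * (s i)^-1).
  apply/row_freeP; exists B; apply/matrixP => k k'; rewrite !mxE.
  under eq_bigr do rewrite !mxE mulrCA [_ == enum_val k']eq_sym.
  rewrite (@sumr_delta _ _ xpredT) /= rootR (inj_eq enum_val_inj) eq_sym.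
  by case: eqP => _; rewrite ?mul0r // divff.
- by apply/row_matrixP => k; rewrite row_mul rowK component_vec_ker row0.
- move=> x /laplacian_ker_span ->; apply: summx_sub => r rR; apply: scalemx_sub.
  by have := row_sub (enum_rank_in rR r) V; rewrite rowK enum_rankK_in.
Qed.

End Laplacian.

Theorem corollary2p7 (C : numClosedFieldType) (n : nat) (E : rel 'I_n)
    (w s : 'I_n -> C) (k : nat) :
  is_digraph E ->
  (forall i, w i != 0) ->
  (forall i, s i ^+ 2 = w i) ->
  (1 <= k)%N ->
  num_components E = k <-> alg_mult (laplacian E w s) 0 = k.
Proof.
move=> _ w_neq0 sqrt_w _.
have s_neq0 i : s i != 0.
  by apply: contraNneq (w_neq0 i) => si0; rewrite -sqrt_w si0 expr0n.
rewrite /alg_mult mup0_char_poly_normal; last exact/hermitian_normalmx/laplacian_hermitian.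
by rewrite (rank_kermx_laplacian E sqrt_w s_neq0).
Qed.
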